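(* Rewriting in the free $3$-category $\mathbf{Toff}$ of reversible Boolean circuits terminates: there is no infinite sequence $\alpha_1,\alpha_2,\dots$ of non-identity $3$-cells of $\mathbf{Toff}$ with ${\tt t}_2(\alpha_i)={\tt s}_2(\alpha_{i+1})$ for all $i$; equivalently, every sequence of reductions of circuits by the rules of $R_3$ (applied in any context, modulo the $3$-category axioms) is finite.
   Context: $\mathbf{Toff}$ is the free strict $3$-category generated by: one $0$-cell $\ast$; one $1$-generator, the wire $1:\ast\to\ast$ (so $1$-cells are bundles of $n$ wires); four $2$-generators (gates) $s:2\Rightarrow2$ (SWAP), $N:1\Rightarrow1$ (NOT), $T_2:2\Rightarrow2$ (controlled NOT), $T_3:3\Rightarrow3$ (Toffoli), so that $2$-cells are circuits built from these gates by parallel and sequential composition; and the set $R_3$ of $3$-generators (rewriting rules) listed below. Write $\star_0$ for parallel composition (left to right), $\star_1$ for sequential composition (diagrammatic order), $1$ also for the identity $2$-cell on one wire and $\mathrm{id}_n$ for the identity $2$-cell on $n$ wires. Let $L_3=(s\star_01)\star_1(1\star_0s)$, $L_4=(s\star_01\star_01)\star_1(1\star_0s\star_01)\star_1(1\star_01\star_0s)$, $L'_3=(1\star_0s)\star_1(s\star_01)$, $L'_4=(1\star_01\star_0s)\star_1(1\star_0s\star_01)\star_1(s\star_01\star_01)$. $R_3$ consists of: permutation rules $s\star_1s\Rrightarrow\mathrm{id}_2$ and $(s\star_01)\star_1(1\star_0s)\star_1(s\star_01)\Rrightarrow(1\star_0s)\star_1(s\star_01)\star_1(1\star_0s)$;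 annihilation rules $N\star_1N\Rrightarrow\mathrm{id}_1$, $T_2\star_1T_2\Rrightarrow\mathrm{id}_2$, $T_3\star_1T_3\Rrightarrow\mathrm{id}_3$; sliding rules $s\star_1(N\star_01)\Rrightarrow(1\star_0N)\star_1s$, $s\star_1(1\star_0N)\Rrightarrow(N\star_01)\star_1s$, $L_3\star_1(T_2\star_01)\Rrightarrow(1\star_0T_2)\star_1L_3$, $L'_3\star_1(1\star_0T_2)\Rrightarrow(T_2\star_01)\star_1L'_3$, $L_4\star_1(T_3\star_01)\Rrightarrow(1\star_0T_3)\star_1L_4$, $L'_4\star_1(1\star_0T_3)\Rrightarrow(T_3\star_01)\star_1L'_4$; and the swapped Toffoli rule $(s\star_01)\star_1T_3\Rrightarrow T_3\star_1(s\star_01)$. $3$-cells of $\mathbf{Toff}$ are formal $\star_0,\star_1,\star_2$-composites of these rules and identities, taken modulo the strict $3$-category axioms (associativity, local units, exchange); $2$-cells are likewise taken modulo these axioms. *)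

From Stdlib Require Import Arith.

(** 1-cells are bundles of n wires, identified with n : nat.
    2-cells are formal (star_0, star_1)-composites of identities and gates,
    taken modulo the strict 2-category axioms (relation [ceq] below).
    3-cells are generated by the rules [rule]; a non-identity 3-cell
    between 2-cells decomposes (modulo the 3-category axioms) into a finite
    nonempty sequence of rule applications in context ([step]). *)

Inductive gate : Type := SWAP | NOT | CNOT | TOF.

Definition gate_ar (g : gate) : nat :=
  match g with SWAP => 2 | NOT => 1 | CNOT => 2 | TOF => 3 end.

(** Formal 2-cell terms.  All generators have equal source and target,
    so every 2-cell has source = target = [ar]. *)
Inductive term : Type :=
| tid   : nat -> term
| tgen  : gate -> term
| comp0 : term -> term -> term
| comp1 : term -> term -> term.

Fixpoint ar (t : term) : nat :=
  match t with
  | tid n => n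
  | tgen g => gate_ar g
  | comp0 t u => ar t + ar u
  | comp1 t _ => ar t
  end.

Fixpoint wt (t : term) : Prop :=
  match t with
  | tid _ => True
  | tgen _ => True
  | comp0 t u => wt t /\ wt u
  | comp1 t u => wt t /\ wt u /\ ar t = ar u
  end.

Inductive ceq : term -> term -> Prop :=
| ceq_refl  : forall t, ceq t t
| ceq_sym   : forall t u, ceq t u -> ceq u t
| ceq_trans : forall t u v, ceq t u -> ceq u v -> ceq t v
| ceq_comp0 : forall t t' u u', ceq t t' -> ceq u u' -> ceq (comp0 t u) (comp0 t' u')
| ceq_comp1 : forall t t' u u', ceq t t' -> ceq u u' -> ceq (comp1 t u) (comp1 t' u')
| ceq_assoc0 : forall t u v, ceq (comp0 (comp0 t u) v) (comp0 t (comp0 u v))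
| ceq_assoc1 : forall t u v, ceq (comp1 (comp1 t u) v) (comp1 t (comp1 u v))
| ceq_unit0l : forall t, ceq (comp0 (tid 0) t) t
| ceq_unit0r : forall t, ceq (comp0 t (tid 0)) t
| ceq_unit1l : forall t, ceq (comp1 (tid (ar t)) t) t
| ceq_unit1r : forall t, ceq (comp1 t (tid (ar t))) t
| ceq_idcomp : forall m n, ceq (comp0 (tid m) (tid n)) (tid (m + n))
| ceq_exch : forall f g f' g', ar f = ar f' -> ar g = ar g' ->
    ceq (comp1 (comp0 f g) (comp0 f' g')) (comp0 (comp1 f f') (comp1 g g')).

Definition w1 : term := tid 1.
Definition sw : term := tgen SWAP.
Definition nt : term := tgen NOT.
Definition T2 : term := tgen CNOT.
Definition T3 : term := tgen TOF.

Definition L3  : term := comp1 (comp0 sw w1) (comp0 w1 sw).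
Definition L4  : term :=
  comp1 (comp1 (comp0 sw (comp0 w1 w1)) (comp0 w1 (comp0 sw w1)))
        (comp0 w1 (comp0 w1 sw)).
Definition L3' : term := comp1 (comp0 w1 sw) (comp0 sw w1).
Definition L4' : term :=
  comp1 (comp1 (comp0 w1 (comp0 w1 sw)) (comp0 w1 (comp0 sw w1)))
        (comp0 sw (comp0 w1 w1)).

Inductive rule : term -> term -> Prop :=
| r_ss    : rule (comp1 sw sw) (tid 2)
| r_ybe   : rule (comp1 (comp1 (comp0 sw w1) (comp0 w1 sw)) (comp0 sw w1))
                 (comp1 (comp1 (comp0 w1 sw) (comp0 sw w1)) (comp0 w1 sw))
| r_NN    : rule (comp1 nt nt) (tid 1)
| r_T2T2  : rule (comp1 T2 T2) (tid 2)
| r_T3T3  : rule (comp1 T3 T3) (tid 3)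
| r_slN1  : rule (comp1 sw (comp0 nt w1)) (comp1 (comp0 w1 nt) sw)
| r_slN2  : rule (comp1 sw (comp0 w1 nt)) (comp1 (comp0 nt w1) sw)
| r_slT2  : rule (comp1 L3 (comp0 T2 w1)) (comp1 (comp0 w1 T2) L3)
| r_slT2' : rule (comp1 L3' (comp0 w1 T2)) (comp1 (comp0 T2 w1) L3')
| r_slT3  : rule (comp1 L4 (comp0 T3 w1)) (comp1 (comp0 w1 T3) L4)
| r_slT3' : rule (comp1 L4' (comp0 w1 T3)) (comp1 (comp0 T3 w1) L4')
| r_swT3  : rule (comp1 (comp0 sw w1) T3) (comp1 T3 (comp0 sw w1)).

Definition in_context (f : term) (a : nat) (l : term) (b : nat) (g : term) : term :=
  comp1 f (comp1 (comp0 (tid a) (comp0 l (tid b))) g).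

Definition step (t u : term) : Prop :=
  wt t /\ wt u /\
  exists (f g l r : term) (a b : nat),
    rule l r /\ wt f /\ wt g /\
    ar f = a + ar l + b /\ ar g = a + ar l + b /\
    ceq t (in_context f a l b g) /\ ceq u (in_context f a r b g).

From Stdlib Require Import List Lia Arith Wf_nat.
From Stdlib Require Import Relation_Operators Inverse_Image Lexicographic_Product.

(** Order circuits lexicographically by their number of gates and by a
    weight.  To define the weight, label every wire by the number of
    SWAP gates it has already crossed (starting from 0 on the inputs); each
    gate costs the sum of the labels of its input wires (a SWAP only the label
    of its first wire).  This evaluation is invariant under the 2-category
    axioms.  Every rule of R_3 either deletes gates, or keeps the gates and
    the outgoing labels but lowers the cost: the sliding rules and the swapped
    Toffoli rule move a gate in front of SWAPs, where it sees smaller labels,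
    and the Yang-Baxter rule lowers the cost by one.  Since the outgoing
    labels are preserved, the decrease survives any context. *)

Definition gate_eval (g : gate) (x : list nat) : list nat * nat :=
  match g, x with
  | SWAP, i :: j :: r => (S j :: S i :: r, i)
  | NOT, i :: _ => (x, i)
  | CNOT, i :: j :: _ => (x, i + j)
  | TOF, i :: j :: k :: _ => (x, i + j + k)
  | _, _ => (x, 0)
  end.

(** [eval t x] is the pair (outgoing labels, cost) of [t] on incoming labels [x]. *)
Fixpoint eval (t : term) (x : list nat) : list nat * nat :=
  match t with
  | tid _ => (x, 0)
  | tgen g => gate_eval g x
  | comp0 t u =>
      let (y, c) := eval t (firstn (ar t) x) in
      let (z, d) := eval u (skipn (ar t) x) in
      (y ++ z, c + d)
  | comp1 t u =>
      let (y, c) := eval t x in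
      let (z, d) := eval u y in
      (z, c + d)
  end.

Fixpoint gate_count (t : term) : nat :=
  match t with
  | tid _ => 0
  | tgen _ => 1
  | comp0 t u | comp1 t u => gate_count t + gate_count u
  end.

Definition weight (t : term) : nat := snd (eval t (repeat 0 (ar t))).

Lemma eval_length t x : length (fst (eval t x)) = length x.
Proof.
  revert x; induction t as [n | g | t IHt u IHu | t IHt u IHu]; intro x; simpl.
  - reflexivity.
  - destruct g, x as [|i [|j [|k r]]]; reflexivity.
  - specialize (IHt (firstn (ar t) x)); specialize (IHu (skipn (ar t) x)).
    destruct (eval t _), (eval u _); simpl in *.
    rewrite length_app, IHt, IHu, length_firstn, length_skipn; lia.
  - specialize (IHt x); destruct (eval t x) as [y c]; simpl in IHt.
    specialize (IHu y); destruct (eval u y); simpl in *; congruence.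
Qed.

Lemma firstn_length_app {A} (x y : list A) : firstn (length x) (x ++ y) = x.
Proof. induction x; simpl; congruence. Qed.

Lemma skipn_length_app {A} (x y : list A) : skipn (length x) (x ++ y) = y.
Proof. induction x; simpl; congruence. Qed.

Lemma ceq_ar t u : ceq t u -> ar t = ar u.
Proof. induction 1; simpl; lia. Qed.

Lemma ceq_gate_count t u : ceq t u -> gate_count t = gate_count u.
Proof. induction 1; simpl; lia. Qed.

Lemma ceq_wt t u : ceq t u -> (wt t <-> wt u).
Proof.
  induction 1 as [| | | | t t' u u' Ht IHt Hu IHu | | | | | | | |]; simpl; try tauto.
  { apply ceq_ar in Ht, Hu; rewrite Ht, Hu; tauto. }
  all: split; intros; repeat match goal with H : _ /\ _ |- _ => destruct H end;
       repeat split; auto; lia.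
Qed.

Lemma ceq_eval t u : ceq t u -> wt t ->
  forall x, length x = ar t -> eval t x = eval u x.
Proof.
  induction 1 as [t | t u H IH | t u v Htu IHtu Huv IHuv
    | t t' u u' Ht IHt Hu IHu | t t' u u' Ht IHt Hu IHu
    | t u v | t u v | t | t | t | t | m n | f g f' g' Ef Eg];
    intros Wt x Hx; simpl in *.
  - reflexivity.
  - apply ceq_wt in H as Wu; apply ceq_ar in H as E.
    symmetry; apply IH; tauto || congruence.
  - apply ceq_wt in Htu as Wu; apply ceq_ar in Htu as E.
    rewrite IHtu, IHuv; tauto || congruence.
  - apply ceq_ar in Ht as E; rewrite <- E, IHt, IHu; try tauto.
    + rewrite length_skipn; lia.
    + rewrite length_firstn; lia.
  - destruct Wt as (Wt & Wu & E).
    rewrite <- IHt by assumption.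
    pose proof (eval_length t x) as Ly.
    destruct (eval t x) as [y c]; simpl in Ly.
    rewrite IHu; congruence.
  - rewrite firstn_firstn, skipn_firstn_comm, skipn_skipn,
      Nat.min_l, Nat.add_sub_swap, Nat.sub_diag, (Nat.add_comm (ar u)) by lia.
    simpl. destruct (eval t _), (eval u _), (eval v _).
    rewrite app_assoc, Nat.add_assoc; reflexivity.
  - destruct (eval t x) as [y c], (eval u y) as [z d], (eval v z).
    rewrite Nat.add_assoc; reflexivity.
  - destruct (eval t x); reflexivity.
  - rewrite firstn_all2, skipn_all2 by lia.
    destruct (eval t x); rewrite app_nil_r, Nat.add_0_r; reflexivity.
  - destruct (eval t x); reflexivity.
  - destruct (eval t x); rewrite Nat.add_0_r; reflexivity.
  - rewrite firstn_skipn; reflexivity.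
  - pose proof (eval_length f (firstn (ar f) x)) as Ly.
    destruct (eval f _) as [y c], (eval g _) as [z d].
    simpl in Ly; rewrite length_firstn, Nat.min_l in Ly by lia.
    rewrite <- Ef, <- Ly, firstn_length_app, skipn_length_app.
    destruct (eval f' y), (eval g' z).
    f_equal; lia.
Qed.

Lemma ceq_weight t u : ceq t u -> wt t -> weight t = weight u.
Proof.
  intros H Wt; unfold weight.
  rewrite <- (ceq_ar _ _ H), (ceq_eval _ _ H Wt) by apply repeat_length.
  reflexivity.
Qed.

Definition lighter (r l : term) : Prop :=
  ar r = ar l /\
  forall x, length x = ar l ->
    fst (eval r x) = fst (eval l x) /\ snd (eval r x) < snd (eval l x).

Lemma lighter_weight r l : lighter r l -> weight r < weight l.
Proof.
  intros [E H]; unfold weight; rewrite E; apply H, repeat_length.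
Qed.

Lemma lighter_comp0l r l u : lighter r l -> lighter (comp0 r u) (comp0 l u).
Proof.
  intros [E H]; split; [simpl; congruence |]; intros x Hx; simpl in *.
  rewrite E; destruct (H (firstn (ar l) x)) as [Hy Hc].
  { rewrite length_firstn; lia. }
  destruct (eval r _), (eval l _), (eval u _); simpl in *; subst; split; [reflexivity | lia].
Qed.

Lemma lighter_comp0r t r l : lighter r l -> lighter (comp0 t r) (comp0 t l).
Proof.
  intros [E H]; split; [simpl; congruence |]; intros x Hx; simpl in *.
  destruct (H (skipn (ar t) x)) as [Hy Hc].
  { rewrite length_skipn; lia. }
  destruct (eval t _), (eval r _), (eval l _); simpl in *; subst; split; [reflexivity | lia].
Qed.

Lemma lighter_comp1l r l u : lighter r l -> lighter (comp1 r u) (comp1 l u).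
Proof.
  intros [E H]; split; [assumption |]; intros x Hx; simpl.
  destruct (H x Hx) as [Hy Hc].
  destruct (eval r x), (eval l x); simpl in *; subst.
  destruct (eval u _); simpl; split; [reflexivity | lia].
Qed.

Lemma lighter_comp1r t r l : ar t = ar l -> lighter r l -> lighter (comp1 t r) (comp1 t l).
Proof.
  intros Et [E H]; split; [reflexivity |]; intros x Hx; simpl in *.
  pose proof (eval_length t x) as Ly.
  destruct (eval t x) as [y c]; simpl in Ly.
  destruct (H y) as [Hz Hd]; [congruence |].
  destruct (eval r y), (eval l y); simpl in *; split; [assumption | lia].
Qed.

Lemma lighter_in_context f a l r b g : ar f = a + ar l + b -> lighter r l ->
  lighter (in_context f a r b g) (in_context f a l b g).
Proof.
  intros Ef H; unfold in_context.
  apply lighter_comp1r.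
  - simpl; lia.
  - apply lighter_comp1l, lighter_comp0r, lighter_comp0l, H.
Qed.

Lemma rule_decreasing l r : rule l r ->
  gate_count r < gate_count l \/ (gate_count r = gate_count l /\ lighter r l).
Proof.
  destruct 1; unfold L3, L4, L3', L4', sw, nt, T2, T3, w1;
    try (left; simpl; lia);
    right; do 2 (split; [reflexivity |]); intros y Hy;
    repeat (destruct y as [|? y]; simpl in Hy; try lia);
    simpl; split; reflexivity || lia.
Qed.

Definition measure (t : term) : nat * nat := (gate_count t, weight t).

Lemma step_measure t u : step t u -> slexprod _ _ lt lt (measure u) (measure t).
Proof.
  intros (Wt & Wu & f & g & l & r & a & b & R & _ & _ & Ef & _ & Ct & Cu).
  unfold measure.
  rewrite (ceq_gate_count _ _ Ct), (ceq_gate_count _ _ Cu),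
    (ceq_weight _ _ Ct Wt), (ceq_weight _ _ Cu Wu).
  destruct (rule_decreasing _ _ R) as [Hc | [Hc Hl]].
  - apply left_slex; simpl; lia.
  - replace (gate_count (in_context f a r b g))
      with (gate_count (in_context f a l b g)) by (simpl; lia).
    apply right_slex, lighter_weight, lighter_in_context; assumption.
Qed.

Lemma well_founded_no_descending_chain {A} (R : A -> A -> Prop) :
  well_founded R -> ~ exists c : nat -> A, forall i, R (c (S i)) (c i).
Proof.
  intros HR [c Hc].
  enough (H : forall x, Acc R x -> forall i, c i <> x) by exact (H _ (HR (c 0)) 0 eq_refl).
  induction 1 as [x _ IH]; intros i E.
  apply (IH (c (S i)) ltac:(rewrite <- E; apply Hc) (S i)), eq_refl.
Qed.

Theorem mainTheorem7 :
  ~ (exists c : nat -> term, forall i : nat, step (c i) (c (S i))).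
Proof.
  intros [c Hc].
  apply (well_founded_no_descending_chain (fun u t => slexprod _ _ lt lt (measure u) (measure t))).
  - apply wf_inverse_image, wf_slexprod; apply lt_wf.
  - exists c; intro i; apply step_measure, Hc.
Qed.
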